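(* Let $L$ be a finite-dimensional Lie algebra over a field $F$ which is not two-generated. Then for each maximal subalgebra $M$ of $L$ and each non-zero element $x\in M$ there exists a maximal subalgebra $S$ of $L$ with $S\neq M$ and $x\in S$. If moreover $F$ is infinite, then each element of $L$ lies in infinitely many maximal subalgebras of $L$.
   Context: A Lie algebra is two-generated if it is generated as a Lie algebra by two of its elements. *)

(* Finite-dimensional Lie algebras over a field F are modelled
   as a finite-dimensional F-vector space V : vectType F together with a
   bracket br : V -> V -> V satisfying the Lie algebra axioms. *)
From HB Require Import structures.
From mathcomp Require Import all_boot all_order all_algebra.
Set Implicit Arguments. Unset Strict Implicit. Unset Printing Implicit Defensive.
Import GRing.Theory.
Local Open Scope ring_scope.

Definition is_lie_bracket (F : fieldType) (V : vectType F) (br : V -> V -> V) : Prop :=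
  [/\ (forall (a : F) (x y z : V), br (a *: x + y) z = a *: br x z + br y z),
      (forall (a : F) (x y z : V), br z (a *: x + y) = a *: br z x + br z y),
      (forall x : V, br x x = 0) &
      (forall x y z : V, br x (br y z) + br y (br z x) + br z (br x y) = 0)].

Definition is_subalg (F : fieldType) (V : vectType F) (br : V -> V -> V)
  (U : {vspace V}) : Prop :=
  forall x y, x \in U -> y \in U -> br x y \in U.

Definition is_max_subalg (F : fieldType) (V : vectType F) (br : V -> V -> V)
  (M : {vspace V}) : Prop :=
  [/\ is_subalg br M, M != fullv &
      forall U : {vspace V}, is_subalg br U -> (M <= U)%VS -> U = M \/ U = fullv].

(* L is two-generated: there are x, y such that the subalgebra generated by
   x, y (the intersection of all subalgebras containing them) is all of L,
   i.e. every subalgebra containing x and y is L. *)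
Definition two_generated (F : fieldType) (V : vectType F) (br : V -> V -> V) : Prop :=
  exists x y : V, forall U : {vspace V},
    is_subalg br U -> x \in U -> y \in U -> U = fullv.

Definition infinite_field (F : fieldType) : Prop :=
  forall s : seq F, exists a : F, a \notin s.

(* Since L is not two-generated, any two elements x, y lie in a proper
   subalgebra, and by finite dimension this extends to a maximal subalgebra S.
   Taking y outside M gives S <> M.  Over an infinite field a finite union of
   proper subspaces never covers L, so y can be chosen outside every proper
   subspace of a given finite list, which then cannot contain S. *)
From HB Require Import structures.
From mathcomp Require Import all_boot all_order all_algebra.
From mathcomp Require Import zify.
From Stdlib Require Import Classical.
Set Implicit Arguments. Unset Strict Implicit.
Local Open Scope ring_scope.
Import GRing.Theory.

Section ProperSubspaces.
Variables (F : fieldType) (V : vectType F).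

Lemma proper_vspace_notin (U : {vspace V}) : U != fullv -> exists z, z \notin U.
Proof.
move=> properU; have: ~~ all (mem U) (vbasis fullv).
  apply: contra properU => /allP basisU.
  have /andP[/eqP span_basis _] := vbasisP (fullv : {vspace V}).
  by rewrite eqEsubv subvf -span_basis; apply/span_subvP.
by case/allPn => z _ zNU; exists z.
Qed.

Lemma line_meets_vspace_once (W : {vspace V}) (y z : V) (a b : F) :
  y \notin W -> z + a *: y \in W -> z + b *: y \in W -> a = b.
Proof.
move=> yNW zaW zbW; apply/eqP; apply: contraR yNW => neq_ab.
have abyW : (a - b) *: y \in W.
  have -> : (a - b) *: y = (z + a *: y) - (z + b *: y).
    by rewrite opprD addrACA subrr add0r scalerBl.
  exact: memvB.
have nz_ab : a - b != 0 by rewrite subr_eq0.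
by rewrite -[y]scale1r -(mulVf nz_ab) -scalerA memvZ.
Qed.

Hypothesis infF : infinite_field F.

(* The list [bad] of forbidden scalars strengthens the induction hypothesis:
   each subspace W captures at most one point of the line z + F y. *)
Lemma line_avoids_vspaces (Ws : seq {vspace V}) (y z : V) (bad : seq F) :
  (forall W, W \in Ws -> y \notin W) ->
  exists2 a, a \notin bad & forall W, W \in Ws -> z + a *: y \notin W.
Proof.
elim: Ws bad => [|W Ws IH] bad yNWs; first by have [a] := infF bad; exists a.
have yNWs' W' : W' \in Ws -> y \notin W'.
  by move=> W'in; apply: yNWs; rewrite inE W'in orbT.
have yNW : y \notin W by apply: yNWs; rewrite mem_head.
have [[b zbW] | noW] := classic (exists b, z + b *: y \in W).
  have [a aNbad aNWs] := IH (b :: bad) yNWs'.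
  move: aNbad; rewrite inE negb_or => /andP[neq_ab aNbad].
  exists a => // W'; rewrite inE => /orP[/eqP -> | /aNWs //].
  by apply: contra neq_ab => zaW; rewrite (line_meets_vspace_once yNW zaW zbW).
have [a aNbad aNWs] := IH bad yNWs'.
exists a => // W'; rewrite inE => /orP[/eqP -> | /aNWs //].
by apply/negP => zaW; apply: noW; exists a.
Qed.

Lemma proper_vspaces_avoid (Us : seq {vspace V}) :
  (forall U, U \in Us -> U != fullv) -> exists y, forall U, U \in Us -> y \notin U.
Proof.
elim: Us => [|U Us IH] properUs; first by exists 0.
have [y yNUs] : exists y, forall U', U' \in Us -> y \notin U'.
  by apply: IH => U' U'in; apply: properUs; rewrite inE U'in orbT.
have [yU | yNU] := boolP (y \in U); last first.
  by exists y => U'; rewrite inE => /orP[/eqP -> | /yNUs].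
have [z zNU] := proper_vspace_notin (properUs U (mem_head _ _)).
have [a _ zaNUs] := line_avoids_vspaces z [::] yNUs.
exists (z + a *: y) => U'; rewrite inE => /orP[/eqP -> | /zaNUs //].
by apply: contra zNU => zaU; rewrite -(addrK (a *: y) z) memvB // memvZ.
Qed.

End ProperSubspaces.

Section MaximalSubalgebras.
Variables (F : fieldType) (V : vectType F) (br : V -> V -> V).

Lemma max_subalg_exists (U : {vspace V}) :
  is_subalg br U -> U != fullv -> exists2 S, is_max_subalg br S & (U <= S)%VS.
Proof.
move: {2}(\dim (fullv : {vspace V}) - \dim U)%N (leqnn (\dim (fullv : {vspace V}) - \dim U)) => n.
elim: n U => [|n IH] U codim subU properU.
  have [le_dim eq_dim] := dimv_leqif_eq (subvf U).
  by move: properU; rewrite -eq_dim eqn_leq le_dim /=; lia.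
have [[U' [subU' leUU' neqU' properU']] | noBigger] :=
  classic (exists U', [/\ is_subalg br U', (U <= U')%VS, U' != U & U' != fullv]).
  have ltUU' : (\dim U < \dim U')%N.
    have [le eq] := dimv_leqif_eq leUU'.
    by rewrite ltn_neqAle le andbT eq eq_sym.
  have leU'f := dimvS (subvf U').
  have [S maxS leU'S] := IH U' ltac:(lia) subU' properU'.
  by exists S => //; apply: subv_trans leUU' leU'S.
exists U => //; split => // U' subU' leUU'.
have [-> | neqU'] := eqVneq U' U; [by left | right].
by apply/eqP; apply: contraT => properU'; case: noBigger; exists U'.
Qed.

Lemma pair_in_max_subalg (x y : V) : ~ two_generated br ->
  exists S, [/\ is_max_subalg br S, x \in S & y \in S].
Proof.
move=> not2gen.
have [U [subU xU yU properU]] :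
    exists U, [/\ is_subalg br U, x \in U, y \in U & U != fullv].
  apply: NNPP => noU; apply: not2gen; exists x, y => U subU xU yU.
  by apply/eqP; apply: contraT => properU; case: noU; exists U.
have [S maxS leUS] := max_subalg_exists subU properU.
by exists S; split => //; apply: (subvP leUS).
Qed.

End MaximalSubalgebras.

Theorem lemma4p3 (F : fieldType) (V : vectType F) (br : V -> V -> V)
  (Hlie : is_lie_bracket br) (Hn2 : ~ two_generated br) :
  (forall (M : {vspace V}) (x : V), is_max_subalg br M -> x \in M -> x != 0 ->
     exists S : {vspace V}, [/\ is_max_subalg br S, S != M & x \in S])
  /\
  (infinite_field F -> forall x : V, forall s : seq {vspace V},
     exists S : {vspace V}, [/\ is_max_subalg br S, x \in S & S \notin s]).
Proof.
split.
  move=> M x [_ properM _] _ _.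
  have [y yNM] := proper_vspace_notin properM.
  have [S [maxS xS yS]] := pair_in_max_subalg x y Hn2.
  by exists S; split => //; apply: contraNneq yNM => <-.
move=> infF x s.
have [y yNs] : exists y, forall U, U \in [seq U <- s | U != fullv] -> y \notin U.
  by apply: proper_vspaces_avoid => // U; rewrite mem_filter => /andP[].
have [S [maxS xS yS]] := pair_in_max_subalg x y Hn2.
exists S; split => //; apply/negP => Sin.
have [_ properS _] := maxS.
have := yNs S; rewrite mem_filter properS Sin => /(_ isT).
by rewrite yS.
Qed.
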